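(* Let $G$ be a finite abelian group, $M$ a $\hat G$-linear, left inductive monoid, and $e$ a non-zero idempotent of $M$. Then the $\mathcal J$-class $\mathcal J_e$ is an apex for the representation $P(e)$ (with the left translation action of $M$), and for its subrepresentation $P(e)e$.
   Context: $\hat G=G\sqcup\{0\}$ with $0$ absorbing. $\mathrm{Vect}_{\hat G}$: objects are finite pointed sets with an action of $\hat G$ ($0v=0$, $g0=0$) such that $G$ acts freely on nonzero elements; morphisms $f$ satisfy $f(0)=0$, $f(gv)=gf(v)$, $f(v_1)=f(v_2)\neq0\Rightarrow Gv_1=Gv_2$. A $\hat G$-linear monoid is a finite monoid $M$ with absorbing element $0_M$ containing $G$ as a subgroup of units commuting with all of $M$, with $G$ acting freely by translation on $M\setminus\{0_M\}$. $\mathrm{Rep}(M,\hat G)$: objects of $\mathrm{Vect}_{\hat G}$ with an $M$-action by morphisms of $\mathrm{Vect}_{\hat G}$, $0_M$ acting as zero and $g\in G$ as the scalar $g$. $\mathrm{Ann}_M(V)=\{x\in M: xV=0\}$. For $a\in M$, $J(a)=MaM$; $\mathcal J_a$ is the class of $a$ under $a\sim b\iff J(a)=J(b)$; a $\mathcal J$-class is regular if it contains an idempotent. $I(a)=\{x\in J(a):MxM\neq J(a)\}$; $P(a)=(J(a)\setminus I(a))\cup\{0\}$ with product $xy$ if $xy\in J(a)\setminus I(a)$, else $0$, and $M$ acts on $P(a)$ by left translation in the same way. $M$ is left inductive if $P(e)$ is an object of $\mathrm{Rep}(M,\hat G)$ under left translation for every idempotent $e$. $P(e)e=\{xe:x\in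 P(e)\}$ (product in $P(e)$), an $M$-stable subset. For a $\mathcal J$-class $J$, $I_J=\{x\in M: J\not\subseteq MxM\}$; a regular $\mathcal J$-class $J$ is an apex of $V$ if $\mathrm{Ann}_M(V)=I_J$. *)

From mathcomp Require Import all_boot.
Set Implicit Arguments.
Unset Strict Implicit.
Unset Printing Implicit Defensive.

Record mon_data (M : finType) := MonData {
  mmul : M -> M -> M;
  mone : M;
  mzero : M }.

Definition is_monoid0 (M : finType) (D : mon_data M) : Prop :=
  [/\ (forall x y z, mmul D x (mmul D y z) = mmul D (mmul D x y) z),
      (forall x, mmul D (mone D) x = x /\ mmul D x (mone D) = x) &
      (forall x, mmul D (mzero D) x = mzero D /\ mmul D x (mzero D) = mzero D)].

Definition is_Ghat_linear (M : finType) (D : mon_data M) (G : {set M}) : Prop :=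
  [/\ is_monoid0 D,
      mone D \in G /\
      (forall g h, g \in G -> h \in G -> mmul D g h \in G),
      (forall g, g \in G -> exists2 h, h \in G & mmul D g h = mone D /\ mmul D h g = mone D),
      (forall g x, g \in G -> mmul D g x = mmul D x g) &
      (forall g x, g \in G -> x != mzero D -> mmul D g x = x -> g = mone D)].

Definition Jid (M : finType) (D : mon_data M) (a : M) : {set M} :=
  [set mmul D (mmul D x a) y | x : M, y : M].

Definition Jclass (M : finType) (D : mon_data M) (a : M) : {set M} :=
  [set b | Jid D b == Jid D a].

Definition Iid (M : finType) (D : mon_data M) (a : M) : {set M} :=
  [set x in Jid D a | Jid D x != Jid D a].

Definition Pset (M : finType) (D : mon_data M) (a : M) : {set M} :=
  (Jid D a :\: Iid D a) :|: [set mzero D].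

(* product in P(a) / left translation action of M on P(a):
   xy if xy in J(a) \ I(a), else 0 *)
Definition Pmul (M : finType) (D : mon_data M) (a : M) (x y : M) : M :=
  if mmul D x y \in Jid D a :\: Iid D a then mmul D x y else mzero D.

Definition PsetE (M : finType) (D : mon_data M) (e : M) : {set M} :=
  [set Pmul D e x e | x in Pset D e].

Definition Ann (M : finType) (D : mon_data M) (act : M -> M -> M) (V : {set M})
  : {set M} := [set x | [forall v in V, act x v == mzero D]].

Definition I_J (M : finType) (D : mon_data M) (J : {set M}) : {set M} :=
  [set x | ~~ (J \subset Jid D x)].

Definition idem (M : finType) (D : mon_data M) (e : M) : bool :=
  mmul D e e == e.

Definition regular_class (M : finType) (D : mon_data M) (J : {set M}) : Prop :=
  exists2 f, f \in J & idem D f.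

(* Objects of Vect_{\hat G}: a finite pointed set (V, z) (here a subset of a
   finite type T) with an action sc of \hat G = G u {0} (0 being 0_M), with 0
   absorbing, and G acting freely on nonzero elements. *)
Definition is_vect_obj (M : finType) (D : mon_data M) (G : {set M})
  (T : finType) (V : {set T}) (z : T) (sc : M -> T -> T) : Prop :=
  [/\ z \in V /\
      (forall g v, g \in G -> v \in V -> sc g v \in V),
      (forall v, v \in V -> sc (mzero D) v = z),
      (forall g, g \in G -> sc g z = z) /\
      (forall v, v \in V -> sc (mone D) v = v),
      (forall g h v, g \in G -> h \in G -> v \in V ->
          sc (mmul D g h) v = sc g (sc h v)) &
      (forall g v, g \in G -> v \in V -> v != z -> sc g v = v -> g = mone D)].

Definition is_vect_mor (M : finType) (D : mon_data M) (G : {set M})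
  (T : finType) (V : {set T}) (z : T) (sc : M -> T -> T) (f : T -> T) : Prop :=
  [/\ (forall v, v \in V -> f v \in V),
      f z = z,
      (forall g v, g \in G -> v \in V -> f (sc g v) = sc g (f v)) &
      (forall v1 v2, v1 \in V -> v2 \in V -> f v1 = f v2 -> f v1 != z ->
          [set sc g v1 | g in G] = [set sc g v2 | g in G])].

Definition is_rep (M : finType) (D : mon_data M) (G : {set M})
  (T : finType) (V : {set T}) (z : T) (sc : M -> T -> T) (act : M -> T -> T)
  : Prop :=
  [/\ is_vect_obj D G V z sc,
      (forall m, is_vect_mor D G V z sc (act m)),
      (forall v, v \in V -> act (mone D) v = v) /\
      (forall m n v, v \in V -> act (mmul D m n) v = act m (act n v)),
      (forall v, v \in V -> act (mzero D) v = z) &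
      (forall g v, g \in G -> v \in V -> act g v = sc g v)].

(* M is left inductive: for every idempotent e, P(e) with left translation
   (the scalars g in G acting by left translation too) is in Rep(M, \hat G). *)
Definition left_inductive (M : finType) (D : mon_data M) (G : {set M}) : Prop :=
  forall e, idem D e ->
    is_rep D G (Pset D e) (mzero D) (Pmul D e) (Pmul D e).

Definition is_apex (M : finType) (D : mon_data M) (J : {set M})
  (act : M -> M -> M) (V : {set M}) : Prop :=
  regular_class D J /\ Ann D act V = I_J D J.

From mathcomp Require Import all_boot.

Set Implicit Arguments.
Unset Strict Implicit.
Unset Printing Implicit Defensive.

(* If [x] is in [I_J], then [x v] can never land in [J_e], since that would
   give [J(e) = J(xv) ⊆ J(x)]; so [x] kills [P(e)]. Conversely, if
   [J_e ⊆ MxM], write [e = u x v]; then [w := v e] satisfies [w e = w],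
   lies in [J_e] (as [e = e e = (u x) w]), and so does [x w] (as
   [e = u (x w)]); hence [x w] is a non-zero element of [P(e)], and [w] is
   also in [P(e) e]. *)

Section MonoidWithZero.

Variables (M : finType) (D : mon_data M).
Hypothesis monD : is_monoid0 D.

Local Notation "x * y" := (mmul D x y).
Local Notation "0" := (mzero D).
Local Notation "1" := (mone D).

Lemma mmulA x y z : x * (y * z) = x * y * z.
Proof. by case: monD. Qed.

Lemma mmul1m x : 1 * x = x.
Proof. by case: monD => _ /(_ x) []. Qed.

Lemma mmulm1 x : x * 1 = x.
Proof. by case: monD => _ /(_ x) []. Qed.

Lemma mmul0m x : 0 * x = 0.
Proof. by case: monD => _ _ /(_ x) []. Qed.

Lemma mmulm0 x : x * 0 = 0.
Proof. by case: monD => _ _ /(_ x) []. Qed.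

Lemma JidP a x : reflect (exists u v, x = u * a * v) (x \in Jid D a).
Proof.
apply: (iffP imset2P) => [[u v _ _ ->]|[u [v ->]]]; first by exists u, v.
by exists u v.
Qed.

Lemma Jid_id a : a \in Jid D a.
Proof. by apply/JidP; exists 1, 1; rewrite mmul1m mmulm1. Qed.

Lemma Jid_mull u a : u * a \in Jid D a.
Proof. by apply/JidP; exists u, 1; rewrite mmulm1. Qed.

Lemma Jid_mulr a v : a * v \in Jid D a.
Proof. by apply/JidP; exists 1, v; rewrite mmul1m. Qed.

Lemma Jid_trans a x y : x \in Jid D a -> y \in Jid D x -> y \in Jid D a.
Proof.
move=> /JidP [p [q ->]] /JidP [u [v ->]]; apply/JidP.
by exists (u * p), (q * v); rewrite !mmulA.
Qed.

Lemma Jid_sub a x : x \in Jid D a -> Jid D x \subset Jid D a.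
Proof. by move=> xa; apply/subsetP => y; apply: Jid_trans. Qed.

Lemma mem_Jclass a b : b \in Jid D a -> a \in Jid D b -> b \in Jclass D a.
Proof. by move=> ba ab; rewrite inE eqEsubset !Jid_sub. Qed.

Lemma in_Jid_diff_Iid a x : (x \in Jid D a :\: Iid D a) = (x \in Jclass D a).
Proof.
rewrite !inE; have [<-|] := eqVneq (Jid D x) (Jid D a); first by rewrite Jid_id.
by rewrite andbT andNb.
Qed.

Lemma PmulE a x y : Pmul D a x y = if x * y \in Jclass D a then x * y else 0.
Proof. by rewrite /Pmul in_Jid_diff_Iid. Qed.

Lemma Jclass_subset_Pset a : Jclass D a \subset Pset D a.
Proof. by apply/subsetP => x xJ; rewrite in_setU in_Jid_diff_Iid xJ. Qed.

Lemma mzero_notin_Jclass a : a != 0 -> 0 \notin Jclass D a.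
Proof.
move=> a_neq0; apply/negP; rewrite inE => /eqP J0a.
move: (Jid_id a); rewrite -J0a => /JidP [u [v a_eq]].
by rewrite a_eq mmulm0 mmul0m eqxx in a_neq0.
Qed.

Lemma Pmul_eq0 a x v : ~~ (Jclass D a \subset Jid D x) -> Pmul D a x v = 0.
Proof.
rewrite PmulE; case: ifP => // xvJ; case/negP.
apply/subsetP => b; rewrite !inE in xvJ * => bJ; apply: Jid_trans (Jid_mulr x v) _.
by rewrite (eqP xvJ) -(eqP bJ) Jid_id.
Qed.

Section Idempotent.

Variable e : M.
Hypotheses (e_idem : idem D e) (e_neq0 : e != 0).

Lemma Jclass_mul_witness x : Jclass D e \subset Jid D x ->
  exists2 w, w \in Jclass D e & w * e = w /\ x * w \in Jclass D e.
Proof.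
move=> /subsetP/(_ e); rewrite inE eqxx => /(_ isT) /JidP [u [v e_eq]].
have ee : e * e = e by apply/eqP.
have e_xw : e = u * (x * (v * e)) by rewrite !mmulA -e_eq ee.
exists (v * e).
  by apply: mem_Jclass (Jid_mull v e) _; rewrite {1}e_xw mmulA Jid_mull.
split; first by rewrite -mmulA ee.
apply: mem_Jclass; first by rewrite mmulA Jid_mull.
by rewrite {1}e_xw Jid_mull.
Qed.

Lemma Ann_Pmul (V : {set M}) :
  {in Jclass D e, forall w, w * e = w -> w \in V} ->
  Ann D (Pmul D e) V = I_J D (Jclass D e).
Proof.
move=> JeV; apply/setP => x; rewrite !inE.
have [/Jclass_mul_witness [w wJ [we xwJ]]|Je_notin] /= := boolP (Jclass D e \subset Jid D x).
  apply/forall_inP => /(_ w (JeV w wJ we)); rewrite PmulE xwJ => /eqP xw0.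
  by move: xwJ; rewrite xw0 (negbTE (mzero_notin_Jclass e_neq0)).
by apply/forall_inP => v _; rewrite Pmul_eq0.
Qed.

End Idempotent.

End MonoidWithZero.

Theorem mainTheorem7 (M : finType) (D : mon_data M) (G : {set M})
  (HG : is_Ghat_linear D G) (Hind : left_inductive D G)
  (e : M) (He : idem D e) (Hne : e != mzero D) :
  is_apex D (Jclass D e) (Pmul D e) (Pset D e) /\
  is_apex D (Jclass D e) (Pmul D e) (PsetE D e).
Proof.
have [monD _ _ _ _] := HG.
have e_reg : regular_class D (Jclass D e) by exists e; rewrite // inE.
have JeP := subsetP (Jclass_subset_Pset monD e).
split; split=> //; apply: Ann_Pmul => // w wJ we; first exact: JeP.
by apply/imsetP; exists w; rewrite ?JeP // PmulE // we wJ.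
Qed.
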